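(* Let $\mathscr P$ be a polymatroid and fix a lexicographic order on $\mathbb N^p$. Then $\displaystyle\sum_{\mathbf n\in I(\mathscr P)}(-1)^{\mathrm{rk}(\mathscr P)-|\mathbf n|}c_{\mathbf n}(\mathscr P)=1$.
   Context: Notation: $[p]=\{1,\dots,p\}$; $\mathbf e_i$ is the $i$th standard basis vector; $\mathbf e_J=\sum_{j\in J}\mathbf e_j$; $|\mathbf n|=n_1+\dots+n_p$; $\le$ is componentwise. Polymatroid: a finite set $\mathscr P\subseteq\mathbb N^p$ that is homogeneous (all $\mathbf u\in\mathscr P$ have the same $|\mathbf u|$, the rank $\mathrm{rk}(\mathscr P)$) and M-convex: for all $\mathbf u,\mathbf v\in\mathscr P$ and $i$ with $u_i>v_i$ there is $j$ with $u_j<v_j$ and $\mathbf u-\mathbf e_i+\mathbf e_j\in\mathscr P$. $I(\mathscr P)=\{\mathbf n\in\mathbb N^p:\mathbf n\le\mathbf u\text{ for some }\mathbf u\in\mathscr P\}$. Lexicographic orders: given a total ordering $\sigma_1,\dots,\sigma_p$ of $[p]$, $\mathbf u\prec\mathbf v$ iff $\mathbf u\neq\mathbf v$ and at the first index (in the order $\sigma_1,\sigma_2,\dots$) where they differ, $\mathbf u$ has the smaller entry. Stalactites: for $\mathbf u\in\mathscr P$, $V\subseteq\mathscr P$, $L(\mathbf u;V)=\{\ell\in[p]:\mathbf u-\mathbf e_\ell+\mathbf e_j\in V\text{ for some }j\}$, $\mathrm{St}(\mathbf u;V)=\{\mathbf u-\mathbf e_J:J\subseteq L(\mathbf u;V)\}$.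 With $\mathscr P=\{\mathbf a_1\prec\dots\prec\mathbf a_r\}$, $c_{\mathbf n}(\mathscr P)$ is the number of $k$ with $\mathbf n\in\mathrm{St}(\mathbf a_k;\{\mathbf a_1,\dots,\mathbf a_{k-1}\})$. *)

From HB Require Import structures.
From mathcomp Require Import all_boot all_order all_algebra.
From mathcomp Require Import fingroup perm finmap.
Set Implicit Arguments. Unset Strict Implicit. Unset Printing Implicit Defensive.
Import GRing.Theory Num.Theory.
Local Open Scope fset_scope.

(* Vectors in N^p, indexed by 'I_p (coordinate i+1 of the paper is index i). *)
Definition vec (p : nat) := {ffun 'I_p -> nat}.

Definition vsum p (n : vec p) : nat := \sum_(i < p) n i.

Definition vle p (n u : vec p) : bool := [forall i, n i <= u i].

(* u - e_i + e_j (used only when u_i >= 1, so truncation never occurs) *)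
Definition exch p (u : vec p) (i j : 'I_p) : vec p :=
  [ffun k => addn (subn (u k) (k == i)) (k == j)].

Definition homogeneous p (P : {fset vec p}) : Prop :=
  forall u v, u \in P -> v \in P -> vsum u = vsum v.

Definition M_convex p (P : {fset vec p}) : Prop :=
  forall u v, u \in P -> v \in P -> forall i : 'I_p, v i < u i ->
    exists j : 'I_p, u j < v j /\ exch u i j \in P.

Definition polymatroid p (P : {fset vec p}) : Prop :=
  P != fset0 /\ homogeneous P /\ M_convex P.

Definition vzero p : vec p := [ffun => 0%N].

(* rank: the common value of |u|, u in P *)
Definition rk p (P : {fset vec p}) : nat := vsum (head (vzero p) P).

Definition box p (u : vec p) : seq (vec p) :=
  filter (fun n => vle n u)
    (map (fun (f : {ffun 'I_p -> 'I_(\max_(i < p) u i).+1}) => ([ffun i => nat_of_ord (f i)] : vec p))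
       (enum {ffun 'I_p -> 'I_(\max_(i < p) u i).+1})).

Definition Iset p (P : {fset vec p}) : seq (vec p) :=
  undup (flatten [seq box u | u <- P]).

(* Lexicographic order w.r.t. the ordering sigma 0, sigma 1, ..., sigma (p-1) of the indices:
   u < v iff at the first (in this order) index where they differ, u is smaller. *)
Definition lex_lt p (sigma : 'S_p) (u v : vec p) : bool :=
  [exists k : 'I_p, [forall j : 'I_p, (j < k)%N ==> (u (sigma j) == v (sigma j))]
                     && (u (sigma k) < v (sigma k))%N].

Definition Lset p (u : vec p) (V : seq (vec p)) : {set 'I_p} :=
  [set l | [exists j : 'I_p, has (fun v : vec p =>
        [forall i, ((v i)%:Z == (u i)%:Z - (i == l)%:Z + (i == j)%:Z)%R]) V]].

Definition in_St p (n u : vec p) (V : seq (vec p)) : bool :=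
  [exists J : {set 'I_p}, (J \subset Lset u V) &&
     [forall i, ((n i)%:Z == (u i)%:Z - (i \in J)%:Z)%R]].

(* c_n(P) = #{ k : n in St(a_k; {a_1,...,a_{k-1}}) } where a_1 < ... < a_r enumerates P;
   {a_1,...,a_{k-1}} is exactly the set of elements of P lex-smaller than a_k. *)
Definition cnum p (sigma : 'S_p) (P : {fset vec p}) (n : vec p) : nat :=
  count (fun u => in_St n u [seq v <- (P : seq (vec p)) | lex_lt sigma v u]) P.

From HB Require Import structures.
From mathcomp Require Import all_boot all_order all_algebra.
From mathcomp Require Import fingroup perm finmap zify.
Import GRing.Theory Num.Theory.
Set Implicit Arguments. Unset Strict Implicit. Unset Printing Implicit Defensive.
Local Open Scope ring_scope.

(** Exchange the two sums: [u] in [P] contributes the alternating sum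
    over the stalactite [St(u; V_u)], [V_u] being the lex predecessors of [u].
    Its elements [u - e_J] are pairwise distinct and lie in [I(P)], so this
    contribution is [sum_(J \subset L(u; V_u)) (-1)^|J|], i.e. [1] if
    [L(u; V_u)] is empty and [0] otherwise.  By M-convexity [L(u; V_u)] is
    empty only when [V_u] is, that is when [u] is the lex minimum of [P]. *)

Lemma sum_subset_sign (T : finType) (L : {set T}) :
  \sum_(J : {set T} | J \subset L) (-1) ^+ #|J| = (L == set0)%:R :> int.
Proof.
rewrite (partition_big (fun J : {set T} => inord #|J| : 'I_#|L|.+1) xpredT) //=.
rewrite -cards_eq0 -expr0n -[0](addNr 1) exprD1n.
apply: eq_bigr => k _; rewrite -cards_draws -sumr_const.
have cardE (J : {set T}) :
    (J \subset L) && (inord #|J| == k)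
      = (J \in [set A : {set T} | A \subset L & #|A| == k]).
  rewrite inE; case: (boolP (J \subset L)) => //= sJL.
  by rewrite -(inj_eq val_inj) /= inordK // ltnS subset_leq_card.
by apply: congr_big => // J; rewrite cardE inE => /andP [_ /eqP ->].
Qed.

Section LexOrder.
Variables (p : nat) (sigma : 'S_p).
Notation lt := (lex_lt sigma).

Lemma lex_lt_irr (u : vec p) : ~~ lt u u.
Proof. by apply/existsP => -[k /andP [_]]; rewrite ltnn. Qed.

Lemma lex_lt_trans (u v w : vec p) : lt u v -> lt v w -> lt u w.
Proof.
move=> /existsP [k1 /andP [/forallP eq1 lt1]] /existsP [k2 /andP [/forallP eq2 lt2]].
pose k := if (k1 <= k2)%N then k1 else k2.
have [le_k1 le_k2] : (k <= k1)%N /\ (k <= k2)%N by rewrite /k; case: (leqP k1 k2); lia.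
have eq_before (j : 'I_p) : (j < k)%N -> u (sigma j) = w (sigma j).
  move=> ltjk; have /implyP/(_ (leq_trans ltjk le_k1))/eqP -> := eq1 j.
  by have /implyP/(_ (leq_trans ltjk le_k2))/eqP -> := eq2 j.
apply/existsP; exists k; apply/andP; split.
  by apply/forallP => j; apply/implyP => /eq_before ->.
rewrite /k; case: (ltngtP k1 k2) => [lt12|lt21|eq12].
- by have /implyP/(_ lt12)/eqP <- := eq2 k1.
- by have /implyP/(_ lt21)/eqP -> := eq1 k2.
- by rewrite (val_inj eq12) in lt1 *; apply: ltn_trans lt1 lt2.
Qed.

Lemma lex_lt_total (u v : vec p) : u != v -> lt u v || lt v u.
Proof.
move=> neq_uv.
have [i neq_i] : exists i, u (sigma i) != v (sigma i).
  apply/existsP; apply: contraR neq_uv => /existsPn eq_uv; apply/eqP/ffunP => i.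
  by have := eq_uv (perm_inv sigma i); rewrite permKV negbK => /eqP.
case: (@arg_minnP _ i (fun k => u (sigma k) != v (sigma k)) val neq_i) => k neq_k min_k.
have eq_before (j : 'I_p) : (j < k)%N -> u (sigma j) = v (sigma j).
  by move=> ltjk; apply/eqP; apply: contraTT ltjk => /min_k; rewrite -leqNgt.
case: (ltngtP (u (sigma k)) (v (sigma k))) => [uv|vu|/eqP]; last by rewrite (negbTE neq_k).
- apply/orP; left; apply/existsP; exists k; rewrite uv andbT.
  by apply/forallP => j; apply/implyP => /eq_before ->.
- apply/orP; right; apply/existsP; exists k; rewrite vu andbT.
  by apply/forallP => j; apply/implyP => /eq_before ->.
Qed.

Lemma exists_lex_min (s : seq (vec p)) :
  s != [::] -> exists2 m, m \in s & ~~ has (lt^~ m) s.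
Proof.
elim: s => // x [|y s] IH _.
  by exists x; rewrite ?mem_head //= orbF lex_lt_irr.
case: IH => // m ms min_m.
case ltxm: (lt x m).
  exists x; first exact: mem_head.
  apply/hasP => -[v]; rewrite inE => /predU1P [-> | vs ltvx].
    by rewrite (negbTE (lex_lt_irr _)).
  by case/hasP: min_m; exists v; last exact: lex_lt_trans ltvx ltxm.
by exists m; [exact: mem_behead | rewrite /= ltxm].
Qed.

Lemma count_lex_min (s : seq (vec p)) : uniq s -> s != [::] ->
  count (fun u => ~~ has (lt^~ u) s) s = 1%N.
Proof.
move=> uniq_s /exists_lex_min [m ms min_m].
have := count_uniq_mem m uniq_s; rewrite ms /= => <-; apply: eq_in_count => u us /=.
apply/idP/eqP => [min_u|-> //]; apply/eqP; apply: contraT => /lex_lt_total.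
by case/orP => [ltum|ltmu]; [case/hasP: min_m; exists u | case/hasP: min_u; exists m].
Qed.

End LexOrder.

(* [u - e_J]; the truncated subtraction is exact for [J \subset Lset u V]
   when [u \notin V] (Lemma [Lset_gt0]). *)
Definition vsub p (u : vec p) (J : {set 'I_p}) : vec p := [ffun i => (u i - (i \in J))%N].

Section Stalactites.
Variable p : nat.
Implicit Types (u v n : vec p) (V : seq (vec p)) (J L : {set 'I_p}).

Lemma vle_vsub u J : vle (vsub u J) u.
Proof. by apply/forallP => i; rewrite ffunE leq_subr. Qed.

Lemma vsum_vsub u J : {in J, forall i, 0 < u i}%N -> (vsum (vsub u J) + #|J|)%N = vsum u.
Proof.
move=> uJ_gt0; rewrite /vsum -sum1_card [X in (_ + X)%N]big_mkcond -big_split /=.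
by apply: eq_bigr => i _; rewrite ffunE; case: (boolP (i \in J)) => [/uJ_gt0|] /=; lia.
Qed.

Lemma vsub_inj_subset u L : {in L, forall i, 0 < u i}%N ->
  {in [pred J : {set 'I_p} | J \subset L] &, injective (vsub u)}.
Proof.
move=> uL_gt0 J1 J2 /subsetP sJ1 /subsetP sJ2 /ffunP eqJ; apply/setP => i.
have := eqJ i; rewrite !ffunE.
by case: (boolP (i \in J1)) => [/sJ1/uL_gt0 ?|_];
  case: (boolP (i \in J2)) => [/sJ2/uL_gt0 ?|_] /=; lia.
Qed.

Lemma Lset_gt0 u V l : u \notin V -> l \in Lset u V -> (0 < u l)%N.
Proof.
move=> uV; rewrite inE => /existsP [j /hasP [w wV /forallP wE]].
rewrite lt0n; apply: contraNneq uV => ul0.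
have jl : j = l.
  apply/eqP; apply: contraT => /negbTE jl.
  by move: (wE l); rewrite ul0 eqxx (eq_sym l) jl => /eqP; lia.
suff -> : u = w by [].
by apply/ffunP => i; move: (wE i); rewrite jl; case: (i == l) => /= /eqP; lia.
Qed.

Lemma in_St_sum n u V : u \notin V ->
  (in_St n u V)%:Z = \sum_(J : {set 'I_p} | J \subset Lset u V) (n == vsub u J)%:Z.
Proof.
move=> uV; have L_gt0 := fun l => Lset_gt0 (l := l) uV.
have condE (J : {set 'I_p}) : J \subset Lset u V ->
    [forall i, (n i)%:Z == (u i)%:Z - (i \in J)%:Z] = (n == vsub u J).
  move=> /subsetP sJL; apply/forallP/eqP => [nE | -> i]; first apply/ffunP => i;
    rewrite ffunE; [move/eqP: (nE i) | apply/eqP];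
    by case: (boolP (i \in J)) => [/sJL/L_gt0|] /=; lia.
rewrite /in_St; case: existsP => [[J0 /andP [sJ0L]] | noJ].
  rewrite condE // => /eqP nJ0; rewrite (bigD1 J0) //= nJ0 eqxx big1 ?addr0 //.
  move=> J /andP [sJL neJ]; case: eqP => // /(vsub_inj_subset L_gt0) eqJ.
  by rewrite eqJ ?eqxx in neJ.
rewrite big1 // => J sJL; case: eqP => // nJ.
by exfalso; apply: noJ; exists J; rewrite sJL condE // nJ eqxx.
Qed.

Lemma mem_Iset (P : {fset vec p}) u n : u \in P -> vle n u -> n \in Iset P.
Proof.
move=> uP nu; rewrite mem_undup; apply/flatten_mapP; exists u => //.
rewrite mem_filter nu; apply/mapP.
exists [ffun i => inord (n i) : 'I_(\max_(i < p) u i).+1]; first by rewrite mem_enum.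
apply/ffunP => i; rewrite !ffunE inordK // ltnS.
by apply: leq_trans (leq_bigmax i); move/forallP: nu.
Qed.

Lemma sum_sign_in_St (P : {fset vec p}) u V : u \in P -> u \notin V ->
  \sum_(n <- Iset P) (-1) ^+ (vsum u - vsum n) * (in_St n u V)%:Z
    = (Lset u V == set0)%:R.
Proof.
move=> uP uV; under eq_bigr do rewrite in_St_sum // mulr_sumr.
rewrite exchange_big -sum_subset_sign; apply: eq_bigr => J sJL.
rewrite (bigD1_seq (vsub u J)) ?undup_uniq ?(mem_Iset uP (vle_vsub u J)) //=.
rewrite eqxx mulr1 big1 ?addr0 => [|n /negbTE -> //]; last by rewrite mulr0.
have := vsum_vsub (fun i iJ => Lset_gt0 uV (subsetP sJL i iJ)).
by move=> <-; rewrite addnC addnK.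
Qed.

End Stalactites.

Section MConvex.
Variables (p : nat) (sigma : 'S_p).

Lemma exch_in_Lset (u : vec p) V l j :
  (0 < u l)%N -> exch u l j \in V -> l \in Lset u V.
Proof.
move=> ul_gt0 exV; rewrite inE; apply/existsP; exists j; apply/hasP.
exists (exch u l j) => //; apply/forallP => i; rewrite ffunE.
by case: (i =P l) => [->|_] /=; lia.
Qed.

Lemma lex_lt_exch (u v : vec p) (k : 'I_p) j :
  (forall t : 'I_p, (t < k)%N -> u (sigma t) = v (sigma t)) ->
  (v (sigma k) < u (sigma k))%N -> (u j < v j)%N ->
  lex_lt sigma (exch u (sigma k) j) u.
Proof.
move=> eq_before ltk ltj; apply/existsP; exists k; apply/andP; split.
  apply/forallP => t; apply/implyP => ltt; rewrite ffunE.
  have -> : (sigma t == sigma k) = false.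
    by rewrite (inj_eq perm_inj); apply/negbTE/eqP => tk; rewrite tk ltnn in ltt.
  have -> : (sigma t == j) = false.
    by apply/negbTE/eqP => tj; move: ltj; rewrite -tj eq_before // ltnn.
  by rewrite subn0 addn0.
have kj : (sigma k == j) = false.
  by apply/negbTE/eqP => kj; move: ltk; rewrite kj => /(ltn_trans ltj); rewrite ltnn.
by rewrite ffunE eqxx kj addn0; lia.
Qed.

Lemma Lset_lex_pred_eq0 (P : {fset vec p}) u : M_convex P -> u \in P ->
  (Lset u [seq v <- (P : seq (vec p)) | lex_lt sigma v u] == set0)
    = ~~ has (lex_lt sigma ^~ u) P.
Proof.
move=> mcP uP; apply/idP/idP; last first.
  rewrite has_filter negbK => /eqP ->; apply/eqP/setP => l.
  by rewrite !inE; apply/existsP => -[].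
apply: contraLR => /negPn /hasP [v vP /existsP [k /andP [/forallP before ltk]]].
have eq_before (t : 'I_p) : (t < k)%N -> u (sigma t) = v (sigma t).
  by move=> ltt; have /implyP/(_ ltt)/eqP -> := before t.
have [j [ltj exP]] := mcP u v uP vP (sigma k) ltk.
apply/set0Pn; exists (sigma k); apply: (@exch_in_Lset _ _ _ j); first lia.
by rewrite mem_filter exP andbT (lex_lt_exch eq_before ltk ltj).
Qed.

End MConvex.

Lemma natr_count (R : pzSemiRingType) (T : Type) (a : pred T) (s : seq T) :
  (count a s)%:R = \sum_(x <- s) (a x)%:R :> R.
Proof. by rewrite -sum1_count natr_sum big_mkcond; apply: eq_bigr => x _; case: (a x). Qed.

Unset Implicit Arguments.
Theorem mainTheorem9 (p : nat) (P : {fset vec p}) (sigma : 'S_p) :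
  polymatroid P ->
  \sum_(n <- Iset P) (-1) ^+ (rk P - vsum n)%N * ((cnum sigma P n)%:Z) = 1 :> int.
Proof.
move=> [P_neq0 [homP mcP]].
have rkE u : u \in P -> rk P = vsum u.
  move=> uP; apply: homP uP; case/fset0Pn: P_neq0 => x xP.
  by rewrite -nth0 mem_nth // -has_predT; apply/hasP; exists x.
pose lex_below u := [seq v <- (P : seq (vec p)) | lex_lt sigma v u].
have term_u u : u \in P ->
    \sum_(n <- Iset P) (-1) ^+ (rk P - vsum n) * (in_St n u (lex_below u))%:R
      = (~~ has (lex_lt sigma ^~ u) P)%:R :> int.
  move=> uP; under eq_bigr do rewrite natz.
  rewrite (rkE u uP) -Lset_lex_pred_eq0 // -(sum_sign_in_St uP) //.
  by rewrite mem_filter (negbTE (lex_lt_irr _ _)).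
under eq_bigr do rewrite -natz natr_count mulr_sumr.
rewrite exchange_big /= big_seq (eq_bigr _ term_u) -big_seq -natr_count.
by rewrite count_lex_min ?fset_uniq.
Qed.
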